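(* Let $M\in\mathcal G$ and let $A\subseteq B\subseteq M$ be submodules. The following are equivalent: (a) $B$ is a strict subobject of $M$ and $A$ is a strict subobject of $B$; (b) $A$ is a strict subobject of $M$ and $B/A$ is a strict subobject of $M/A$; (c) $A$ and $B$ are both strict subobjects of $M$. (A quotient $B/A$ arising this way is called a strict subquotient of $M$.)
   Context: Let $\Lambda$ be a finite dimensional algebra over a field and $\mathrm{mod}\text-\Lambda$ the category of finitely generated right $\Lambda$-modules. Fix a torsion class $\mathcal G\subseteq\mathrm{mod}\text-\Lambda$, i.e. a class of modules closed under isomorphisms, extensions and quotients. For $B\in\mathcal G$, a subobject of $B$ is a submodule of $B$ that lies in $\mathcal G$. A subobject $A\subseteq B$ is a strict subobject if $A\cap B'\in\mathcal G$ for every subobject $B'$ of $B$. *)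

From HB Require Import structures.
From mathcomp Require Import all_boot all_order all_algebra all_field.
Set Implicit Arguments.
Unset Strict Implicit.
Unset Printing Implicit Defensive.
Import GRing.Theory.
Local Open Scope ring_scope.

(* Finitely generated right modules over a finite dimensional F-algebra L
   (L : falgType F), modelled concretely: a module is a finite dimensional
   F-space of row vectors 'rV[F]_d together with the right action
   v . x := v *m fact M x. *)

Section Defs.
Variables (F : fieldType) (L : falgType F).

Record fmod := FMod { fdim : nat; fact : L -> 'M[F]_fdim }.

Definition is_rmod (M : fmod) : Prop :=
  [/\ (forall (a : F) (x y : L), fact M (a *: x + y) = a *: fact M x + fact M y),
      fact M 1 = 1%:M &
      (forall x y : L, fact M (x * y) = fact M x *m fact M y)].

(* L-linear maps v |-> v *m f *)
Definition is_hom (M N : fmod) (f : 'M[F]_(fdim M, fdim N)) : Prop :=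
  forall x : L, fact M x *m f = f *m fact N x.

(* torsion class: a class of modules closed under isomorphisms, quotients
   (epimorphic images) and extensions (short exact sequences) *)
Definition torsion_class (G : fmod -> Prop) : Prop :=
  [/\ (forall M, G M -> is_rmod M),
      (forall (M N : fmod) (f : 'M[F]_(fdim M, fdim N)),
          is_rmod M -> is_rmod N -> is_hom f -> row_free f -> row_full f ->
          G M -> G N),
      (forall (M N : fmod) (f : 'M[F]_(fdim M, fdim N)),
          is_rmod M -> is_rmod N -> is_hom f -> row_full f -> G M -> G N) &
      (forall (A M C : fmod) (f : 'M[F]_(fdim A, fdim M)) (g : 'M[F]_(fdim M, fdim C)),
          is_rmod A -> is_rmod M -> is_rmod C -> is_hom f -> is_hom g ->
          row_free f -> row_full g -> (f == kermx g)%MS ->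
          G A -> G C -> G M)].

(* a submodule of M, given by (the row space of) a matrix U *)
Definition submodule (M : fmod) m (U : 'M[F]_(m, fdim M)) : Prop :=
  forall x : L, (U *m fact M x <= U)%MS.

Arguments submodule M {m} U.

(* coordinates on the row space of U (as in mxrepresentation.v) *)
Definition val_sub n (U : 'M[F]_n) m (W : 'M[F]_(m, \rank U)) : 'M[F]_(m, n) :=
  W *m row_base U.
Definition in_sub n (U : 'M[F]_n) m (W : 'M[F]_(m, n)) : 'M[F]_(m, \rank U) :=
  W *m (invmx (row_ebase U) *m pid_mx (\rank U)).

(* coordinates on the quotient by the row space of U (as in mxrepresentation.v) *)
Definition val_fact n (U : 'M[F]_n) m (W : 'M[F]_(m, \rank (cokermx U))) : 'M[F]_(m, n) :=
  W *m (row_base (cokermx U) *m row_ebase U).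
Definition in_fact n (U : 'M[F]_n) m (W : 'M[F]_(m, n)) : 'M[F]_(m, \rank (cokermx U)) :=
  W *m col_base (cokermx U).

Arguments val_sub {n} U {m} W.
Arguments in_sub {n} U {m} W.
Arguments val_fact {n} U {m} W.
Arguments in_fact {n} U {m} W.

Definition sub_mod (M : fmod) m (U : 'M[F]_(m, fdim M)) : fmod :=
  @FMod (\rank <<U>>%MS)
        (fun x => in_sub <<U>>%MS (val_sub <<U>>%MS 1%:M *m fact M x)).

Definition fact_mod (M : fmod) m (U : 'M[F]_(m, fdim M)) : fmod :=
  @FMod (\rank (cokermx <<U>>%MS))
        (fun x => in_fact <<U>>%MS (val_fact <<U>>%MS 1%:M *m fact M x)).

Arguments sub_mod M {m} U.
Arguments fact_mod M {m} U.

Definition subobj (G : fmod -> Prop) (X : fmod) m (U : 'M[F]_(m, fdim X)) : Prop :=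
  submodule X U /\ G (sub_mod X U).

Arguments subobj G X {m} U.

Definition strict_subobj (G : fmod -> Prop) (X : fmod) m (A : 'M[F]_(m, fdim X)) : Prop :=
  subobj G X A /\
  forall k (B' : 'M[F]_(k, fdim X)), subobj G X B' -> G (sub_mod X (A :&: B')%MS).

Arguments strict_subobj G X {m} A.

End Defs.

Arguments submodule {F L} M {m} U.
Arguments sub_mod {F L} M {m} U.
Arguments fact_mod {F L} M {m} U.
Arguments subobj {F L} G X {m} U.
Arguments strict_subobj {F L} G X {m} A.

From HB Require Import structures.
From mathcomp Require Import all_boot all_order all_algebra all_field.
From mathcomp Require Import mxrepresentation.
Set Implicit Arguments.
Unset Strict Implicit.
Unset Printing Implicit Defensive.
Import GRing.Theory.
Local Open Scope ring_scope.

(* All three conditions are "A and B strict in M" in disguise.  Subobjects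
   of a subobject B of M are exactly the subobjects of M contained in B, with
   the same intersections, so strictness of A in B is strictness of A in M
   tested only against subobjects of B; testing against B' is the same as
   testing against B :&: B', which is a subobject when B is strict.  For the
   quotient, the subobjects of M/A are the C/A with A <= C a subobject of M
   (torsion classes are closed under extensions and G A holds), and
   B/A :&: C/A = (B :&: C)/A; conversely B :&: B' is rebuilt as the
   extension of (B :&: B')/A by A :&: B'. *)

(* Once the section is closed, [U] is an implicit argument of
   [val_sub U W] and [val_fact U W], and [is_hom] has implicit modules. *)
Local Notation hom N M e := (@is_hom _ _ N M e).
Local Notation vsub U W := (@val_sub _ _ U%MS _ W).
Local Notation vfact U W := (@val_fact _ _ U%MS _ W).

Section Modules.
Variables (F : fieldType) (L : falgType F).
Implicit Types M : fmod L.

Lemma row_free_mulmxl m n p (f : 'M[F]_(m, n)) (e : 'M_(n, p)) :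
  row_free (f *m e) -> row_free f.
Proof.
move=> free_fe; apply/eqP/anti_leq; rewrite rank_leq_row /=.
by rewrite -{1}(eqP free_fe) mxrankM_maxl.
Qed.

Lemma row_base_genmx n m (U : 'M[F]_(m, n)) : (row_base <<U>>%MS :=: U)%MS.
Proof. exact: eqmx_trans (eq_row_base _) (genmxE _). Qed.

Lemma sub_mod_eqmx M m1 m2 (U : 'M[F]_(m1, fdim M)) (V : 'M[F]_(m2, fdim M)) :
  (U == V)%MS -> sub_mod M U = sub_mod M V.
Proof. by move/genmxP => eqUV; rewrite /sub_mod eqUV. Qed.

Lemma submodule_genmx M m (U : 'M[F]_(m, fdim M)) x k (Z : 'M_(k, fdim M)) :
  submodule M U -> (Z <= <<U>>)%MS -> (Z *m fact M x <= <<U>>)%MS.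
Proof.
move=> HU sZU; rewrite genmxE; apply: submx_trans (HU x).
by apply: submxMr; move: sZU; rewrite genmxE.
Qed.

Lemma submodule_cap M m1 m2 (U : 'M[F]_(m1, fdim M)) (V : 'M[F]_(m2, fdim M)) :
  submodule M U -> submodule M V -> submodule M (U :&: V)%MS.
Proof.
move=> HU HV x; rewrite sub_capmx.
by rewrite (submx_trans _ (HU x)) ?(submx_trans _ (HV x)) // submxMr ?capmxSl ?capmxSr.
Qed.

(* [val_sub], [in_sub], [val_fact], [in_fact] unfold to [val_submod],
   [in_submod], [val_factmod], [in_factmod] of mxrepresentation.v, whose
   lemmas are used throughout. *)
Lemma val_sub_act M m (U : 'M[F]_(m, fdim M)) k (Y : 'M_(k, fdim (sub_mod M U))) x :
  submodule M U ->
  vsub <<U>> (Y *m fact (sub_mod M U) x) = vsub <<U>> Y *m fact M x.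
Proof.
move=> HU; rewrite /= /val_sub -mulmxA -[RHS]mulmxA; congr (_ *m _).
have := @in_submodK F _ <<U>>%MS _ (vsub <<U>> 1%:M *m fact M x).
rewrite /val_submod /= => ->; first by rewrite /val_sub mul1mx.
exact/submodule_genmx/val_submodP.
Qed.

Lemma mulmx_in_fact n (U : 'M[F]_n) m k (W : 'M[F]_(m, k)) (Z : 'M_(k, n)) :
  W *m in_fact U Z = in_fact U (W *m Z).
Proof. exact: mulmxA. Qed.

Lemma in_fact_act M m (U : 'M[F]_(m, fdim M)) k (Z : 'M_(k, fdim M)) x :
  submodule M U ->
  in_fact <<U>>%MS (Z *m fact M x) = in_fact <<U>>%MS Z *m fact (fact_mod M U) x.
Proof.
move=> HU; rewrite -{1}(@add_sub_fact_mod F _ <<U>>%MS _ Z) /in_fact !mulmxDl.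
have /eqP -> : val_submod (in_submod <<U>>%MS Z) *m fact M x
                 *m col_base (cokermx <<U>>%MS) == 0.
  rewrite -[_ *m col_base _]/(in_factmod <<U>>%MS _) in_factmod_eq0.
  exact/submodule_genmx/val_submodP.
by rewrite add0r /= /val_factmod /in_factmod /val_fact /= !mulmxA mulmx1.
Qed.

Lemma is_hom_row_base M m (U : 'M[F]_(m, fdim M)) :
  submodule M U -> hom (sub_mod M U) M (row_base <<U>>%MS).
Proof.
move=> HU x; have := val_sub_act 1%:M x HU; rewrite /val_sub !mul1mx => <-.
by rewrite mulmxA.
Qed.

Lemma sub_mod_rmod M m (U : 'M[F]_(m, fdim M)) :
  is_rmod M -> submodule M U -> is_rmod (sub_mod M U).
Proof.
case=> linM oneM mulM HU; split.
- by move=> a x y /=; rewrite linM /in_sub mulmxDr mulmxDl -scalemxAr -scalemxAl.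
- by rewrite /= oneM mulmx1; apply: (@val_submodK F _ <<U>>%MS).
- move=> x y; apply: (row_free_inj (row_base_free <<U>>%MS)).
  rewrite /= (is_hom_row_base HU) -mulmxA (is_hom_row_base HU) mulmxA.
  by rewrite (is_hom_row_base HU) mulM mulmxA.
Qed.

Lemma fact_mod_rmod M m (U : 'M[F]_(m, fdim M)) :
  is_rmod M -> submodule M U -> is_rmod (fact_mod M U).
Proof.
case=> linM oneM mulM HU; split => /=.
- by move=> a x y; rewrite linM /in_fact mulmxDr mulmxDl -scalemxAr -scalemxAl.
- by rewrite oneM mulmx1; apply: (@val_factmodK F _ <<U>>%MS).
- by move=> x y; rewrite mulM mulmxA in_fact_act.
Qed.

Lemma submodule_in_fact M m (A : 'M[F]_(m, fdim M)) k (X : 'M_(k, fdim M)) :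
  submodule M A -> submodule M X -> submodule (fact_mod M A) (in_fact <<A>>%MS X).
Proof. by move=> HA HX x; rewrite -in_fact_act //; apply: submxMr. Qed.

Lemma submodule_val_sub M m (B : 'M[F]_(m, fdim M)) k
    (U : 'M_(k, fdim (sub_mod M B))) :
  submodule M B -> submodule (sub_mod M B) U -> submodule M (vsub <<B>> U).
Proof. by move=> HB HU x; rewrite -val_sub_act //; apply: submxMr. Qed.

Lemma submodule_in_sub M m (B : 'M[F]_(m, fdim M)) k (Z : 'M_(k, fdim M)) :
  submodule M B -> submodule M Z -> (Z <= B)%MS ->
  submodule (sub_mod M B) (in_sub <<B>>%MS Z).
Proof.
move=> HB HZ sZB x; rewrite -(@val_submodS F _ <<B>>%MS).
have vZ : vsub <<B>> (in_sub <<B>>%MS Z) = Z by apply: in_submodK; rewrite genmxE.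
by rewrite [val_submod _](val_sub_act _ _ HB) vZ [val_submod _]vZ.
Qed.

Lemma in_fact_cap n (A : 'M[F]_n) m1 m2 (X : 'M_(m1, n)) (Y : 'M_(m2, n)) :
  (A <= X)%MS -> (in_fact A (X :&: Y) == in_fact A X :&: in_fact A Y)%MS.
Proof.
move=> sAX; apply/andP; split; first exact: capmxMr.
apply/rV_subP => u; rewrite sub_capmx => /andP[/submxP[a ->] /submxP[b Eb]].
have sdiffA : (a *m X - b *m Y <= A)%MS.
  by rewrite -in_factmod_eq0 /in_factmod /= mulmxBl -!mulmxA Eb subrr.
have saX : (a *m X <= A + Y :&: X)%MS.
  rewrite (matrix_modl Y sAX) sub_capmx submxMl andbT.
  by rewrite -(subrK (b *m Y) (a *m X)) addmx_sub_adds ?submxMl.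
rewrite mulmxA; apply: submx_trans (submxMr (col_base (cokermx A)) saX) _.
change (in_factmod A (A + Y :&: X)%MS <= in_factmod A (X :&: Y))%MS.
by rewrite in_factmod_addsK capmxC.
Qed.

Lemma val_sub_cap n (U : 'M[F]_n) m1 m2 (P : 'M_(m1, \rank U)) (Q : 'M_(m2, \rank U)) :
  (vsub U (P :&: Q) == vsub U P :&: vsub U Q)%MS.
Proof.
apply/andP; split; first exact: capmxMr.
apply/rV_subP => u; rewrite sub_capmx => /andP[/submxP[a ->] /submxP[b Eb]].
have eq_ab : a *m P = b *m Q.
  by apply: (row_free_inj (row_base_free U)); rewrite /= -!mulmxA.
by rewrite /val_sub mulmxA submxMr // sub_capmx submxMl eq_ab submxMl.
Qed.

Lemma submodule_lift_fact M m (A : 'M[F]_(m, fdim M)) k (C : 'M_(k, fdim (fact_mod M A))) :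
  submodule M A -> submodule (fact_mod M A) C ->
  [/\ submodule M (vfact <<A>> C + A)%MS,
      (in_fact <<A>>%MS (vfact <<A>> C + A)%MS == C)%MS &
      (A <= vfact <<A>> C + A)%MS].
Proof.
move=> HA HC; split; last exact: addsmxSr.
- move=> x; rewrite addsmxMr addsmx_sub (submx_trans (HA x) (addsmxSr _ _)) andbT.
  set Y := vfact <<A>> C *m fact M x.
  rewrite -(@add_sub_fact_mod F _ <<A>>%MS _ Y) addsmxC addmx_sub_adds //.
    by have := @val_submodP F _ <<A>>%MS _ (in_submod <<A>>%MS Y); rewrite genmxE.
  have -> : in_factmod <<A>>%MS Y = C *m fact (fact_mod M A) x.
    rewrite [in_factmod _ _](in_fact_act _ _ HA).
    by rewrite [in_fact _ _](@val_factmodK F _ <<A>>%MS _ C).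
  exact: submxMr (HC x).
- apply/eqmxP; rewrite addsmxC.
  apply: eqmx_trans (eqmxMr _ (adds_eqmx (eqmx_sym (genmxE A)) (eqmx_refl _))) _.
  apply: eqmx_trans (in_factmod_addsK _ _) _.
  by rewrite (@val_factmodK F _ <<A>>%MS _ C).
Qed.

End Modules.

Section Torsion.
Variables (F : fieldType) (L : falgType F) (G : fmod L -> Prop).
Hypothesis HG : torsion_class G.
Implicit Types M N : fmod L.

(* Two modules embedded in M with the same image are isomorphic. *)
Lemma torsion_iso_image M N1 N2 (e1 : 'M[F]_(fdim N1, fdim M))
    (e2 : 'M[F]_(fdim N2, fdim M)) :
  is_rmod N1 -> is_rmod N2 -> row_free e1 -> row_free e2 ->
  hom N1 M e1 -> hom N2 M e2 -> (e1 == e2)%MS -> G N1 -> G N2.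
Proof.
move=> RN1 RN2 free1 free2 hom1 hom2 eq12; case: HG => _ closed_iso _ _.
pose f := e1 *m pinvmx e2.
have fe2 : f *m e2 = e1 by rewrite mulmxKpV //; case/andP: eq12.
have free_f : row_free f by apply: (row_free_mulmxl (e := e2)); rewrite fe2.
apply: (closed_iso N1 N2 f) => //.
- move=> x; apply: (row_free_inj free2).
  by rewrite -mulmxA fe2 hom1 -mulmxA hom2 mulmxA fe2.
- rewrite /row_full (eqP free_f) -(eqP free1) -(eqP free2).
  exact/eqP/eqmx_rank.
Qed.

Lemma torsion_quot_image M m (A : 'M[F]_(m, fdim M)) N1 N2
    (e1 : 'M[F]_(fdim N1, fdim M)) (e2 : 'M[F]_(fdim N2, fdim (fact_mod M A))) :
  submodule M A -> is_rmod N1 -> is_rmod N2 -> row_free e2 ->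
  hom N1 M e1 -> hom N2 (fact_mod M A) e2 -> (in_fact <<A>>%MS e1 == e2)%MS ->
  G N1 -> G N2.
Proof.
move=> HA RN1 RN2 free2 hom1 hom2 eq12; case: HG => _ _ closed_quot _.
pose f := in_fact <<A>>%MS e1 *m pinvmx e2.
have fe2 : f *m e2 = in_fact <<A>>%MS e1 by rewrite mulmxKpV //; case/andP: eq12.
apply: (closed_quot N1 N2 f) => //.
- move=> x; apply: (row_free_inj free2).
  rewrite -mulmxA fe2 mulmx_in_fact hom1 in_fact_act //.
  by rewrite -[RHS]mulmxA hom2 mulmxA fe2.
- apply/eqP/anti_leq; rewrite rank_leq_col /=.
  by rewrite (leq_trans _ (mxrankM_maxl f e2)) // fe2 (eqmx_rank eq12) (eqP free2).
Qed.

Lemma torsion_ext_image M m (A : 'M[F]_(m, fdim M)) N K C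
    (e : 'M[F]_(fdim N, fdim M)) (eK : 'M[F]_(fdim K, fdim M))
    (eC : 'M[F]_(fdim C, fdim (fact_mod M A))) :
  submodule M A -> is_rmod N -> is_rmod K -> is_rmod C ->
  row_free e -> row_free eK -> row_free eC ->
  hom N M e -> hom K M eK -> hom C (fact_mod M A) eC ->
  (eK == e :&: A)%MS -> (eC == in_fact <<A>>%MS e)%MS ->
  G K -> G C -> G N.
Proof.
move=> HA RN RK RC free_e freeK freeC homN homK homC eqK eqC.
case: HG => _ _ _ closed_ext.
pose g := in_fact <<A>>%MS e *m pinvmx eC.
have geC : g *m eC = in_fact <<A>>%MS e by rewrite mulmxKpV //; case/andP: eqC.
have sKe : (eK <= e)%MS by case/andP: eqK => sK _; rewrite (submx_trans sK) ?capmxSl.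
pose f := eK *m pinvmx e.
have fe : f *m e = eK by rewrite mulmxKpV.
apply: (closed_ext K N C f g) => //.
- move=> x; apply: (row_free_inj free_e).
  by rewrite -mulmxA fe homK -mulmxA homN mulmxA fe.
- move=> x; apply: (row_free_inj freeC).
  rewrite -mulmxA geC mulmx_in_fact homN in_fact_act //.
  by rewrite -[RHS]mulmxA homC [RHS]mulmxA geC.
- by apply: (row_free_mulmxl (e := e)); rewrite fe.
- apply/eqP/anti_leq; rewrite rank_leq_col /=.
  by rewrite (leq_trans _ (mxrankM_maxl g eC)) // geC -(eqmx_rank eqC) (eqP freeC).
- apply/rV_eqP => u; rewrite sub_kermx -(mulmx_free_eq0 _ freeC) -mulmxA geC.
  rewrite [u *m _]mulmxA [_ == 0](in_factmod_eq0 <<A>>%MS (u *m e)).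
  by rewrite genmxE -(submxMfree _ _ free_e) fe (eqmxP eqK) sub_capmx submxMl.
Qed.

Lemma torsion_fact_sub M m (A : 'M[F]_(m, fdim M)) k (X : 'M_(k, fdim M)) :
  is_rmod M -> submodule M A -> submodule M X -> G (sub_mod M X) ->
  G (sub_mod (fact_mod M A) (in_fact <<A>>%MS X)).
Proof.
move=> RM HA HX; have HXA := submodule_in_fact HA HX.
apply: (@torsion_quot_image _ _ A (sub_mod M X)
          (sub_mod (fact_mod M A) (in_fact <<A>>%MS X)) (row_base <<X>>%MS)
          (row_base <<in_fact <<A>>%MS X>>%MS) HA).
- exact: sub_mod_rmod.
- exact: sub_mod_rmod (fact_mod_rmod RM HA) HXA.
- exact: row_base_free.
- exact: is_hom_row_base.
- exact: is_hom_row_base.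
- apply/eqmxP; exact: eqmx_trans (eqmxMr _ (row_base_genmx X))
                                 (eqmx_sym (row_base_genmx _)).
Qed.

Lemma torsion_ext_sub M m (A : 'M[F]_(m, fdim M)) k (X : 'M_(k, fdim M)) :
  is_rmod M -> submodule M A -> submodule M X -> G (sub_mod M (X :&: A)%MS) ->
  G (sub_mod (fact_mod M A) (in_fact <<A>>%MS X)) -> G (sub_mod M X).
Proof.
move=> RM HA HX.
apply: (@torsion_ext_image _ _ A (sub_mod M X) (sub_mod M (X :&: A)%MS)
          (sub_mod (fact_mod M A) (in_fact <<A>>%MS X)) (row_base <<X>>%MS)
          (row_base <<(X :&: A)%MS>>%MS) (row_base <<in_fact <<A>>%MS X>>%MS) HA).
- exact: sub_mod_rmod.
- exact: sub_mod_rmod RM (submodule_cap HX HA).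
- exact: sub_mod_rmod (fact_mod_rmod RM HA) (submodule_in_fact HA HX).
- exact: row_base_free.
- exact: row_base_free.
- exact: row_base_free.
- exact: is_hom_row_base.
- exact: is_hom_row_base (submodule_cap HX HA).
- exact: is_hom_row_base (submodule_in_fact HA HX).
- apply/eqmxP; apply: eqmx_trans (row_base_genmx _) _.
  exact: cap_eqmx (eqmx_sym (row_base_genmx _)) (eqmx_refl _).
- apply/eqmxP; apply: eqmx_trans (row_base_genmx _) _.
  exact: eqmxMr (eqmx_sym (row_base_genmx _)).
Qed.

Lemma torsion_sub_subE M m (B : 'M[F]_(m, fdim M)) k (U : 'M_(k, fdim (sub_mod M B))) :
  is_rmod M -> submodule M B -> submodule (sub_mod M B) U ->
  G (sub_mod (sub_mod M B) U) <-> G (sub_mod M (vsub <<B>> U)).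
Proof.
move=> RM HB HU.
have RU := sub_mod_rmod (sub_mod_rmod RM HB) HU.
have RV := sub_mod_rmod RM (submodule_val_sub HB HU).
pose e := row_base <<U>>%MS *m row_base <<B>>%MS.
have free_e : row_free e.
  by rewrite /row_free mxrankMfree; apply: row_base_free.
have hom_e : hom (sub_mod (sub_mod M B) U) M e.
  by move=> x; rewrite mulmxA (is_hom_row_base HU) -mulmxA (is_hom_row_base HB) mulmxA.
have eq_e : (e :=: row_base <<vsub <<B>> U>>%MS)%MS.
  apply: eqmx_trans (eqmxMr _ (row_base_genmx _)) _.
  exact: eqmx_sym (row_base_genmx _).
have hom_V := is_hom_row_base (submodule_val_sub HB HU).
split; first exact: torsion_iso_image RU RV free_e (row_base_free _) hom_e hom_V
                      (introT eqmxP eq_e).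
exact: torsion_iso_image RV RU (row_base_free _) free_e hom_V hom_e
         (introT eqmxP (eqmx_sym eq_e)).
Qed.

End Torsion.

Section StrictSubquotient.
Variables (F : fieldType) (L : falgType F) (G : fmod L -> Prop).
Hypothesis HG : torsion_class G.
Variable M : fmod L.
Hypothesis HM : is_rmod M.
Variables (A B : 'M[F]_(fdim M)).
Hypotheses (HA : submodule M A) (HB : submodule M B) (sAB : (A <= B)%MS).

Let vsA : vsub <<B>> (in_sub <<B>>%MS A) = A.
Proof. by apply: in_submodK; rewrite genmxE. Qed.

Let HsA : submodule (sub_mod M B) (in_sub <<B>>%MS A).
Proof. exact: submodule_in_sub. Qed.

Let sAgB : (<<A>> <= B)%MS.
Proof. by rewrite genmxE. Qed.

Lemma strict_subobj_trans :
  strict_subobj G M B -> strict_subobj G (sub_mod M B) (in_sub <<B>>%MS A) ->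
  strict_subobj G M A.
Proof.
move=> [_ stB] [[_ GsA] stA]; split.
  by split=> //; have := (torsion_sub_subE HG HM HB HsA).1 GsA; rewrite vsA.
move=> k B' [HB' GB']; pose U := in_sub <<B>>%MS (B :&: B')%MS.
have HBB' := submodule_cap HB HB'.
have HU : submodule (sub_mod M B) U by apply: submodule_in_sub (capmxSl _ _).
have vU : vsub <<B>> U = (B :&: B')%MS.
  by apply: in_submodK; rewrite genmxE capmxSl.
have GU : G (sub_mod (sub_mod M B) U).
  by apply/(torsion_sub_subE HG HM HB HU); rewrite vU; apply: stB.
have /(torsion_sub_subE HG HM HB (submodule_cap HsA HU)) := stA _ _ (conj HU GU).
suff eqAB' : (vsub <<B>> (in_sub <<B>>%MS A :&: U) == A :&: B')%MS.
  by rewrite (sub_mod_eqmx eqAB').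
have := val_sub_cap (in_sub <<B>>%MS A) U; rewrite vsA vU capmxA => /eqmxP eq1.
exact/eqmxP/(eqmx_trans eq1)/cap_eqmx/eqmx_refl/capmx_idPl.
Qed.

Lemma strict_subobj_restrict :
  strict_subobj G M A -> strict_subobj G (sub_mod M B) (in_sub <<B>>%MS A).
Proof.
move=> [[_ GA] stA]; split.
  by split=> //; apply/(torsion_sub_subE HG HM HB HsA); rewrite vsA.
move=> k U [HU GU]; apply/(torsion_sub_subE HG HM HB (submodule_cap HsA HU)).
have := val_sub_cap (in_sub <<B>>%MS A) U; rewrite vsA => /sub_mod_eqmx ->.
apply: stA; split; first exact: submodule_val_sub.
exact/(torsion_sub_subE HG HM HB HU).
Qed.

Lemma strict_subobj_of_fact :
  strict_subobj G M A -> strict_subobj G (fact_mod M A) (in_fact <<A>>%MS B) ->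
  strict_subobj G M B.
Proof.
move=> [[_ GA] stA] [[_ GBA] stBA].
have GcapA X : submodule M X -> G (sub_mod M X) -> G (sub_mod M (B :&: X :&: A)%MS).
  move=> HX GX; suff /sub_mod_eqmx -> : (B :&: X :&: A == A :&: X)%MS by apply: stA.
  by rewrite capmxC capmxA; apply/eqmxP/cap_eqmx/eqmx_refl/capmx_idPl.
split.
  split=> //; apply: (torsion_ext_sub HG HM HA HB) GBA.
  by have /capmx_idPr/eqmxP/sub_mod_eqmx -> := sAB.
move=> k B' [HB' GB']; apply: (torsion_ext_sub HG HM HA (submodule_cap HB HB')).
  exact: GcapA.
rewrite (sub_mod_eqmx (M := fact_mod M A) (in_fact_cap B' sAgB)).
apply: stBA; split; first exact: submodule_in_fact.
exact (torsion_fact_sub HG HM HA HB' GB').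
Qed.

Lemma strict_subobj_fact :
  strict_subobj G M A -> strict_subobj G M B ->
  strict_subobj G (fact_mod M A) (in_fact <<A>>%MS B).
Proof.
move=> [[_ GA] _] [[_ GB] stB]; split.
  by split; [apply: submodule_in_fact | apply: torsion_fact_sub].
move=> k C [HC GC]; have [HlC eqC sAlC] := submodule_lift_fact HA HC.
set lC := (vfact <<A>> C + A)%MS in HlC eqC sAlC *.
have GlC : G (sub_mod M lC).
  apply: (torsion_ext_sub HG HM HA HlC).
    by have /capmx_idPr/eqmxP/sub_mod_eqmx -> := sAlC.
  by rewrite (sub_mod_eqmx (M := fact_mod M A) eqC).
have := torsion_fact_sub HG HM HA (submodule_cap HB HlC) (stB _ _ (conj HlC GlC)).
suff /(sub_mod_eqmx (M := fact_mod M A)) -> :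
  (in_fact <<A>>%MS (B :&: lC)%MS == in_fact <<A>>%MS B :&: C)%MS by [].
apply/eqmxP/(eqmx_trans (eqmxP (in_fact_cap _ sAgB))).
exact: cap_eqmx (eqmx_refl _) (eqmxP eqC).
Qed.

End StrictSubquotient.

Unset Implicit Arguments.

Theorem mainTheorem5 (F : fieldType) (L : falgType F) (G : fmod L -> Prop)
  (HG : torsion_class G) (M : fmod L) (HM : is_rmod M) (GM : G M)
  (A B : 'M[F]_(fdim M))
  (HA : submodule M A) (HB : submodule M B) (AB : (A <= B)%MS) :
  let a := strict_subobj G M B /\ strict_subobj G (sub_mod M B) (in_sub <<B>>%MS A ) in
  let b := strict_subobj G M A /\ strict_subobj G (fact_mod M A) (in_fact <<A>>%MS B ) in
  let c := strict_subobj G M A /\ strict_subobj G M B in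
  (a <-> b) /\ (b <-> c).
Proof.
move=> a b c.
have a_c : a -> c.
  move=> [stB stA]; split=> //; exact: (strict_subobj_trans HG HM HA HB AB).
have c_a : c -> a.
  move=> [stA stB]; split=> //; exact: (strict_subobj_restrict HG HM HA HB AB).
have b_c : b -> c.
  move=> [stA stBA]; split=> //; exact: (strict_subobj_of_fact HG HM HA HB AB).
have c_b : c -> b.
  move=> [stA stB]; split=> //; exact: (strict_subobj_fact HG HM HA HB AB).
by split; split; [move/a_c/c_b | move/b_c/c_a | move/b_c | move/c_b].
Qed.
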